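(* Let $(M^4,g,I,J)$ be a nondegenerate generalized Kähler structure with angle function $p$ and Lee form $\theta=\theta_I$. Then $$\theta=\frac{1}{2(p^2-1)}\,dp\circ[I,J].$$
   Context: Generalized Kähler (GK) structure: $I,J$ are integrable complex structures and $g$ is Hermitian for both. With $\omega_I(X,Y)=g(X,IY)$ and $\omega_J(X,Y)=g(X,JY)$, one has $d^c_I\omega_I=H=-d^c_J\omega_J$ and $dH=0$, where $d^c=\sqrt{-1}(\bar\partial-\partial)$. The Lee form $\theta=\theta_I$ is defined by $d\omega_I=\theta\wedge\omega_I$. The angle function is $p=\frac14\operatorname{tr}(IJ)$. Nondegenerate means $g^{-1}[I,J]$ is nondegenerate; in dimension $4$ this is equivalent to $I,J$ inducing the same orientation with $|p|<1$. For a $1$-form $\alpha$ and an endomorphism $A$, $\alpha\circ A$ denotes $X\mapsto\alpha(AX)$. *)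

(* classical reals.  Everything is done in local coordinates on an
   open subset U of R^4 (the statement is pointwise/local). *)
From Stdlib Require Import Reals Lra ClassicalEpsilon.
Open Scope R_scope.

Definition pt := (R * R * R * R)%type.

Definition coord (x : pt) (i : nat) : R :=
  match x with (a, b, c, d) =>
    match i with 0 => a | 1 => b | 2 => c | 3 => d | _ => 0 end end.

Definition shift (x : pt) (i : nat) (t : R) : pt :=
  match x with (a, b, c, d) =>
    match i with
    | 0 => (a + t, b, c, d) | 1 => (a, b + t, c, d)
    | 2 => (a, b, c + t, d) | 3 => (a, b, c, d + t) | _ => x end end.

Definition close (y x : pt) (del : R) : Prop :=
  forall i, (i < 4)%nat -> Rabs (coord y i - coord x i) < del.

Definition is_open (U : pt -> Prop) : Prop :=
  forall x, U x -> exists del, 0 < del /\ forall y, close y x del -> U y.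

Definition cont_on (U : pt -> Prop) (f : pt -> R) : Prop :=
  forall x, U x -> forall eps, 0 < eps -> exists del, 0 < del /\
    forall y, U y -> close y x del -> Rabs (f y - f x) < eps.

(* i-th partial derivative of f at x (meaningful when it exists) *)
Definition pd (f : pt -> R) (i : nat) (x : pt) : R :=
  epsilon (inhabits 0) (fun l => derivable_pt_lim (fun t => f (shift x i t)) 0 l).

Fixpoint Ck (n : nat) (U : pt -> Prop) (f : pt -> R) : Prop :=
  cont_on U f /\
  match n with
  | 0 => True
  | S m => forall i, (i < 4)%nat ->
      (forall x, U x -> exists l, derivable_pt_lim (fun t => f (shift x i t)) 0 l)
      /\ Ck m U (fun x => pd f i x)
  end.

Definition smooth_on (U : pt -> Prop) (f : pt -> R) : Prop := forall n, Ck n U f.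

(* Tensor fields in components.  For an endomorphism field A,
   A x a b = A^a_b, i.e. (A X)^a = sum_b A x a b * X^b. *)
Definition sum4 (f : nat -> R) : R := f 0%nat + f 1%nat + f 2%nat + f 3%nat.

Definition comp (A B : nat -> nat -> R) (i j : nat) : R := sum4 (fun k => A i k * B k j).
Definition commut (A B : nat -> nat -> R) (i j : nat) : R := comp A B i j - comp B A i j.

Definition field1 := pt -> nat -> R.
Definition field2 := pt -> nat -> nat -> R.
Definition field3 := pt -> nat -> nat -> nat -> R.
Definition field4 := pt -> nat -> nat -> nat -> nat -> R.

Definition omega_of (g I : field2) : field2 :=
  fun x i j => sum4 (fun k => g x i k * I x k j).

(* exterior derivative (components of forms, no 1/k! factors) *)
Definition d0 (f : pt -> R) : field1 := fun x i => pd f i x.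
Definition d2 (w : field2) : field3 := fun x i j k =>
  pd (fun y => w y j k) i x - pd (fun y => w y i k) j x + pd (fun y => w y i j) k x.
Definition d3 (h : field3) : field4 := fun x i j k l =>
  pd (fun y => h y j k l) i x - pd (fun y => h y i k l) j x
  + pd (fun y => h y i j l) k x - pd (fun y => h y i j k) l x.

(* theta /\ omega for a 1-form and a 2-form (same convention as d) *)
Definition wedge12 (th : field1) (w : field2) : field3 := fun x i j k =>
  th x i * w x j k + th x j * w x k i + th x k * w x i j.

(* action of I on forms: (I a)(X1,..,Xk) = a(I X1,..,I Xk) *)
Definition act2 (I : field2) (w : field2) : field2 := fun x i j =>
  sum4 (fun k => sum4 (fun l => I x k i * I x l j * w x k l)).
Definition act3 (I : field2) (h : field3) : field3 := fun x a b c =>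
  sum4 (fun k => sum4 (fun l => sum4 (fun m =>
    I x k a * I x l b * I x m c * h x k l m))).

(* d^c = sqrt(-1)(dbar - d) = I^{-1} d I ; on 3-forms I^{-1} = - I *)
Definition dc (I : field2) (w : field2) : field3 := fun x a b c =>
  - act3 I (d2 (act2 I w)) x a b c.

Definition nijenhuis (I : field2) (x : pt) (i j k : nat) : R :=
  sum4 (fun l => I x l i * pd (fun y => I y k j) l x
               - I x l j * pd (fun y => I y k i) l x
               - I x k l * (pd (fun y => I y l j) i x - pd (fun y => I y l i) j x)).

Definition delta (i j : nat) : R := if Nat.eqb i j then 1 else 0.

Definition smooth_field2 (U : pt -> Prop) (A : field2) : Prop :=
  forall i j, (i < 4)%nat -> (j < 4)%nat -> smooth_on U (fun x => A x i j).

Definition complex_structure (U : pt -> Prop) (I : field2) : Prop :=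
  smooth_field2 U I /\
  (forall x, U x -> forall i j, (i < 4)%nat -> (j < 4)%nat ->
     comp (I x) (I x) i j = - delta i j) /\
  (forall x, U x -> forall i j k, (i < 4)%nat -> (j < 4)%nat -> (k < 4)%nat ->
     nijenhuis I x i j k = 0).

Definition riemannian_metric (U : pt -> Prop) (g : field2) : Prop :=
  smooth_field2 U g /\
  (forall x, U x -> forall i j, (i < 4)%nat -> (j < 4)%nat -> g x i j = g x j i) /\
  (forall x, U x -> forall v : nat -> R, (exists i, (i < 4)%nat /\ v i <> 0) ->
     0 < sum4 (fun i => sum4 (fun j => g x i j * v i * v j))).

Definition hermitian (U : pt -> Prop) (g I : field2) : Prop :=
  forall x, U x -> forall i j, (i < 4)%nat -> (j < 4)%nat ->
    sum4 (fun k => sum4 (fun l => I x k i * I x l j * g x k l)) = g x i j.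

Definition GK (U : pt -> Prop) (g I J : field2) : Prop :=
  riemannian_metric U g /\ complex_structure U I /\ complex_structure U J /\
  hermitian U g I /\ hermitian U g J /\
  exists H : field3,
    (forall x, U x -> forall a b c, (a < 4)%nat -> (b < 4)%nat -> (c < 4)%nat ->
       dc I (omega_of g I) x a b c = H x a b c /\
       H x a b c = - dc J (omega_of g J) x a b c) /\
    (forall x, U x -> forall a b c e, (a < 4)%nat -> (b < 4)%nat -> (c < 4)%nat ->
       (e < 4)%nat -> d3 H x a b c e = 0).

(* g^{-1}[I,J] nondegenerate (g^{-1} is an isomorphism, so this is the
   vanishing of the kernel of [I,J] at every point) *)
Definition nondegenerate (U : pt -> Prop) (I J : field2) : Prop :=
  forall x, U x -> forall v : nat -> R,
    (forall i, (i < 4)%nat -> sum4 (fun j => commut (I x) (J x) i j * v j) = 0) ->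
    forall i, (i < 4)%nat -> v i = 0.

Definition angle (I J : field2) (x : pt) : R := / 4 * sum4 (fun i => comp (I x) (J x) i i).

Definition lee_form (U : pt -> Prop) (g I : field2) (theta : field1) : Prop :=
  forall x, U x -> forall i j k, (i < 4)%nat -> (j < 4)%nat -> (k < 4)%nat ->
    d2 (omega_of g I) x i j k = wedge12 theta (omega_of g I) x i j k.

From Stdlib Require Import Reals Lra Lia ClassicalEpsilon FunctionalExtensionality.
Open Scope R_scope.

(* Work at a point with jets.  With [w = g I] skew, [pfaff] and its polarization [pfaff_polar]
   satisfy [w pfaff_adj(w) = - pfaff w]; polarizing this at [g I], [g J] and conjugating by
   [g^{-1}] gives [pfaff(gJ) I J + pfaff(gI) J I = - pfaff_polar(gI,gJ)], and conjugating by
   [I] shows that nondegeneracy forces [pfaff(gI) = pfaff(gJ)].  Hence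
   [IJ + JI = 2p], [[I,J]^2 = 4(p^2-1)] with [p^2 <> 1], and
   [pfaff_polar(w_I, w_J) + 2 p pfaff(w_I) = 0] on the whole open set.
   Differentiating the last identity, the Christoffel part of [d w] drops out (the trace
   acts on the invariant [pfaff_polar]), while by Gray's formula [nabla w] is read off from
   [d w_I = theta /\ w_I] and from [d w_J = - theta /\ w_J], which follows from
   [d^c_I w_I = - d^c_J w_J].  The result is [dp = theta o [I,J] / 2]; composing with [[I,J]]
   once more gives the formula. *)

Definition Mat := nat -> nat -> R.
Definition Vec := nat -> R.

Notation i0 := 0%nat.
Notation i1 := 1%nat.
Notation i2 := 2%nat.
Notation i3 := 3%nat.

Ltac case4 i := destruct i as [|[|[|[|?]]]]; [| | | | exfalso; lia].

Lemma sum4_ext (f h : nat -> R) :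
  (forall k, (k < 4)%nat -> f k = h k) -> sum4 f = sum4 h.
Proof. intros H; unfold sum4; rewrite !H by lia; ring. Qed.

Lemma sum4_eq0 (f : nat -> R) : (forall k, (k < 4)%nat -> f k = 0) -> sum4 f = 0.
Proof. intros H; unfold sum4; rewrite !H by lia; ring. Qed.

Lemma sum4_mul_delta (f : nat -> R) k : (k < 4)%nat -> sum4 (fun j => f j * delta j k) = f k.
Proof. intros Hk; case4 k; unfold sum4, delta; simpl; ring. Qed.

(** * Pfaffians of skew 4x4 matrices *)

Definition skew_mx (w : Mat) := forall i j, (i < 4)%nat -> (j < 4)%nat -> w i j = - w j i.

Definition pfaff (w : Mat) := w i0 i1 * w i2 i3 - w i0 i2 * w i1 i3 + w i0 i3 * w i1 i2.

Definition pfaff_polar (v w : Mat) :=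
  v i0 i1 * w i2 i3 + w i0 i1 * v i2 i3 - v i0 i2 * w i1 i3
  - w i0 i2 * v i1 i3 + v i0 i3 * w i1 i2 + w i0 i3 * v i1 i2.

(* The skew matrix of [*w]; for skew [w] it is [- pfaff w] times the inverse of [w]. *)
Definition pfaff_adj (w : Mat) : Mat := fun i j =>
  match i, j with
  | 0,1 => w i2 i3 | 1,0 => - w i2 i3 | 0,2 => - w i1 i3 | 2,0 => w i1 i3
  | 0,3 => w i1 i2 | 3,0 => - w i1 i2 | 1,2 => w i0 i3 | 2,1 => - w i0 i3
  | 1,3 => - w i0 i2 | 3,1 => w i0 i2 | 2,3 => w i0 i1 | 3,2 => - w i0 i1
  | _,_ => 0 end.

Lemma skew_mx_diag (w : Mat) : skew_mx w -> forall i, (i < 4)%nat -> w i i = 0.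
Proof. intros Hw i Hi. pose proof (Hw i i Hi Hi). lra. Qed.

Ltac rewrite_lower Hw :=
  repeat first [ rewrite (Hw 1 0)%nat by lia | rewrite (Hw 2 0)%nat by lia
               | rewrite (Hw 3 0)%nat by lia | rewrite (Hw 2 1)%nat by lia
               | rewrite (Hw 3 1)%nat by lia | rewrite (Hw 3 2)%nat by lia ].

Ltac rewrite_skew Hw :=
  rewrite_lower Hw;
  repeat first [ rewrite (skew_mx_diag _ Hw 0)%nat by lia | rewrite (skew_mx_diag _ Hw 1)%nat by lia
               | rewrite (skew_mx_diag _ Hw 2)%nat by lia | rewrite (skew_mx_diag _ Hw 3)%nat by lia ].

Lemma mul_pfaff_adj (w : Mat) : skew_mx w -> forall i j, (i < 4)%nat -> (j < 4)%nat ->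
  comp w (pfaff_adj w) i j = - pfaff w * delta i j.
Proof.
  intros Hw i j Hi Hj.
  case4 i; case4 j; unfold comp, sum4, pfaff_adj, pfaff, delta; simpl; rewrite_skew Hw; ring.
Qed.

Lemma pfaff_adj_mul (w : Mat) : skew_mx w -> forall i j, (i < 4)%nat -> (j < 4)%nat ->
  comp (pfaff_adj w) w i j = - pfaff w * delta i j.
Proof.
  intros Hw i j Hi Hj.
  case4 i; case4 j; unfold comp, sum4, pfaff_adj, pfaff, delta; simpl; rewrite_skew Hw; ring.
Qed.

Lemma pfaff_polar_adj (v w : Mat) : skew_mx v -> skew_mx w ->
  forall i j, (i < 4)%nat -> (j < 4)%nat ->
  comp v (pfaff_adj w) i j + comp w (pfaff_adj v) i j = - pfaff_polar v w * delta i j.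
Proof.
  intros Hv Hw i j Hi Hj.
  case4 i; case4 j; unfold comp, sum4, pfaff_adj, pfaff_polar, delta; simpl;
    rewrite_skew Hv; rewrite_skew Hw; ring.
Qed.

Lemma pfaff_polar_sym v w : pfaff_polar v w = pfaff_polar w v.
Proof. unfold pfaff_polar; ring. Qed.

Lemma pfaff_polarxx w : pfaff_polar w w = 2 * pfaff w.
Proof. unfold pfaff_polar, pfaff; ring. Qed.

(* Matrices are total functions on [nat]; only their entries below 4 are meaningful. *)
Definition mx_eq (A B : Mat) := forall i j, (i < 4)%nat -> (j < 4)%nat -> A i j = B i j.
Definition mx_add (A B : Mat) : Mat := fun i j => A i j + B i j.
Definition mx_scale (c : R) (A : Mat) : Mat := fun i j => c * A i j.

Lemma comp_assoc A B C i j : comp (comp A B) C i j = comp A (comp B C) i j.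
Proof. unfold comp, sum4; ring. Qed.

Lemma comp_scale_l c A B i j : comp (mx_scale c A) B i j = c * comp A B i j.
Proof. unfold comp, mx_scale, sum4; ring. Qed.

Lemma comp_scale_r c A B i j : comp A (mx_scale c B) i j = c * comp A B i j.
Proof. unfold comp, mx_scale, sum4; ring. Qed.

Lemma mx_eq_compl A A' B : mx_eq A A' -> mx_eq (comp A B) (comp A' B).
Proof. intros H i j Hi Hj; unfold comp; apply sum4_ext; intros k Hk; rewrite H by auto; ring. Qed.

Lemma mx_eq_compr A B B' : mx_eq B B' -> mx_eq (comp A B) (comp A B').
Proof. intros H i j Hi Hj; unfold comp; apply sum4_ext; intros k Hk; rewrite H by auto; ring. Qed.

Lemma mx_eq_add A A' B B' : mx_eq A A' -> mx_eq B B' -> mx_eq (mx_add A B) (mx_add A' B').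
Proof. intros H1 H2 i j Hi Hj; unfold mx_add; rewrite H1, H2; auto. Qed.

Lemma comp_delta_l A : mx_eq (comp delta A) A.
Proof. intros i j Hi Hj; case4 i; unfold comp, sum4, delta; simpl; ring. Qed.

Lemma comp_delta_r A : mx_eq (comp A delta) A.
Proof. intros i j Hi Hj; case4 j; unfold comp, sum4, delta; simpl; ring. Qed.

Lemma mul_pfaff_adj_mx w : skew_mx w -> mx_eq (comp w (pfaff_adj w)) (mx_scale (- pfaff w) delta).
Proof. intros Hw i j Hi Hj. rewrite mul_pfaff_adj by auto. unfold mx_scale; ring. Qed.

Lemma pfaff_adj_mul_mx w : skew_mx w -> mx_eq (comp (pfaff_adj w) w) (mx_scale (- pfaff w) delta).
Proof. intros Hw i j Hi Hj. rewrite pfaff_adj_mul by auto. unfold mx_scale; ring. Qed.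

(** * Hermitian structures at a point *)

Definition sym_mx (g : Mat) := forall i j, (i < 4)%nat -> (j < 4)%nat -> g i j = g j i.

Definition posdef_mx (g : Mat) := forall v : Vec, (exists i, (i < 4)%nat /\ v i <> 0) ->
  0 < sum4 (fun i => sum4 (fun j => g i j * v i * v j)).

Definition cplx_mx (I : Mat) := forall i j, (i < 4)%nat -> (j < 4)%nat -> comp I I i j = - delta i j.

Definition herm_mx (g I : Mat) := forall i j, (i < 4)%nat -> (j < 4)%nat ->
  sum4 (fun k => sum4 (fun l => I k i * I l j * g k l)) = g i j.

(* Hypotheses are used through their defects, which [ring] can carry as atoms. *)
Definition cplx_defect (I : Mat) i j := comp I I i j + delta i j.
Definition herm_defect (g I : Mat) i j := sum4 (fun k => sum4 (fun l => I k i * I l j * g k l)) - g i j.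

Lemma cplx_defect0 I : cplx_mx I -> forall i j, (i < 4)%nat -> (j < 4)%nat -> cplx_defect I i j = 0.
Proof. intros H i j Hi Hj; unfold cplx_defect; rewrite H by lia; ring. Qed.

Lemma herm_defect0 g I : herm_mx g I -> forall i j, (i < 4)%nat -> (j < 4)%nat -> herm_defect g I i j = 0.
Proof. intros H i j Hi Hj; unfold herm_defect; rewrite H by lia; ring. Qed.

Lemma sum4_comp_cplx I : cplx_mx I ->
  forall (Y : Vec) c, (c < 4)%nat -> sum4 (fun m => Y m * comp I I m c) + Y c = 0.
Proof. intros HI Y c Hc. unfold sum4. rewrite !HI by lia. case4 c; unfold delta; simpl; ring. Qed.

Lemma cplx_mx_sq I : cplx_mx I -> mx_eq (comp I I) (mx_scale (-1) delta).
Proof. intros H i j Hi Hj; rewrite H by auto; unfold mx_scale; ring. Qed.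

Lemma skew_metric_cplx g I : sym_mx g -> cplx_mx I -> herm_mx g I -> skew_mx (comp g I).
Proof.
  intros Hg HI HH i j Hi Hj.
  assert (E : comp g I i j + comp g I j i =
     sum4 (fun k => I k i * sum4 (fun m => g k m * cplx_defect I m j))
     - sum4 (fun k => herm_defect g I i k * I k j)).
  { case4 i; case4 j; unfold cplx_defect, herm_defect, comp, sum4, delta; simpl; rewrite_lower Hg; ring. }
  rewrite (sum4_eq0 (fun k => I k i * _)) in E.
  2:{ intros k Hk. apply Rmult_eq_0_compat_l, sum4_eq0. intros m Hm.
      rewrite cplx_defect0 by auto. ring. }
  rewrite sum4_eq0 in E. lra.
  intros k Hk. rewrite herm_defect0 by auto. ring.
Qed.

Lemma metric_of_form g I : cplx_mx I -> mx_eq g (mx_scale (-1) (comp (comp g I) I)).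
Proof.
  intros HI i j Hi Hj. unfold mx_scale. rewrite comp_assoc.
  rewrite (mx_eq_compr _ _ _ (cplx_mx_sq I HI)) by auto.
  rewrite comp_scale_r, comp_delta_r by auto. ring.
Qed.

Lemma posdef_mx_ker g (u : Vec) : posdef_mx g ->
  (forall a, (a < 4)%nat -> sum4 (fun k => g a k * u k) = 0) -> forall i, (i < 4)%nat -> u i = 0.
Proof.
  intros Hp Hu i Hi. destruct (Req_dec (u i) 0) as [|Hne]; auto. exfalso.
  assert (Q : sum4 (fun i => sum4 (fun j => g i j * u i * u j)) =
              sum4 (fun i => u i * sum4 (fun k => g i k * u k))) by (unfold sum4; ring).
  rewrite (sum4_eq0 (fun i => u i * _)) in Q.
  2:{ intros k Hk; rewrite Hu by auto; ring. }
  pose proof (Hp u (ex_intro _ i (conj Hi Hne))). lra.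
Qed.

Lemma metric_cplx_ker g I (v : Vec) : posdef_mx g -> cplx_mx I ->
  (forall a, (a < 4)%nat -> sum4 (fun k => comp g I a k * v k) = 0) ->
  forall i, (i < 4)%nat -> v i = 0.
Proof.
  intros Hp HI Hv i Hi.
  set (u := fun k => sum4 (fun n => I k n * v n)).
  assert (Hu : forall k, (k < 4)%nat -> u k = 0).
  { apply (posdef_mx_ker g u Hp). intros a Ha. rewrite <- (Hv a Ha). unfold u, comp, sum4. ring. }
  assert (C : sum4 (fun k => I i k * u k) = - v i + sum4 (fun n => cplx_defect I i n * v n)).
  { unfold u. case4 i; unfold cplx_defect, comp, sum4, delta; simpl; ring. }
  rewrite (sum4_eq0 (fun k => I i k * u k)) in C.
  2:{ intros k Hk; rewrite Hu by auto; ring. }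
  rewrite sum4_eq0 in C. lra.
  intros k Hk; rewrite cplx_defect0 by auto; ring.
Qed.

(* A vanishing Pfaffian makes every column of [pfaff_adj (g I)] a kernel vector of [g I];
   but these columns are the entries of [g I], which cannot all vanish. *)
Lemma pfaff_metric_cplx_neq0 g I : sym_mx g -> posdef_mx g -> cplx_mx I -> herm_mx g I ->
  pfaff (comp g I) <> 0.
Proof.
  intros Hg Hp HI HH HP0.
  pose proof (skew_metric_cplx g I Hg HI HH) as Hw.
  assert (Adj0 : forall m j, (m < 4)%nat -> (j < 4)%nat -> pfaff_adj (comp g I) m j = 0).
  { intros m j Hm Hj. apply (metric_cplx_ker g I (fun n => pfaff_adj (comp g I) n j) Hp HI); auto.
    intros a Ha. fold (comp (comp g I) (pfaff_adj (comp g I)) a j).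
    rewrite mul_pfaff_adj, HP0 by auto. ring. }
  assert (W0 : forall i k, (i < 4)%nat -> (k < 4)%nat -> comp g I i k = 0).
  { pose proof (Adj0 i2 i3 ltac:(lia) ltac:(lia)) as W01.
    pose proof (Adj0 i1 i3 ltac:(lia) ltac:(lia)) as W02.
    pose proof (Adj0 i1 i2 ltac:(lia) ltac:(lia)) as W03.
    pose proof (Adj0 i0 i3 ltac:(lia) ltac:(lia)) as W12.
    pose proof (Adj0 i0 i2 ltac:(lia) ltac:(lia)) as W13.
    pose proof (Adj0 i0 i1 ltac:(lia) ltac:(lia)) as W23.
    cbv beta iota delta [pfaff_adj] in W01, W02, W03, W12, W13, W23.
    intros i k Hi Hk; case4 i; case4 k; try (apply skew_mx_diag; auto; lia);
      first [lra | rewrite Hw by lia; lra]. }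
  assert (G0 : forall i j, (i < 4)%nat -> (j < 4)%nat -> g i j = 0).
  { intros i j Hi Hj. rewrite (metric_of_form g I HI) by auto. unfold mx_scale.
    apply Rmult_eq_0_compat_l, sum4_eq0. intros k Hk. rewrite W0 by auto. ring. }
  assert (He0 : exists i, (i < 4)%nat /\ delta i 0%nat <> 0)
    by (exists 0%nat; split; [lia | unfold delta; simpl; lra]).
  pose proof (Hp (fun i => delta i 0%nat) He0) as Hpos.
  rewrite sum4_eq0 in Hpos. lra.
  intros k Hk. apply sum4_eq0. intros l Hl. rewrite G0 by auto. ring.
Qed.

(* [g^{-1} = - (pfaff (g I))^{-1} I (pfaff_adj (g I))], inverting [g = - (g I) I]. *)
Definition metric_inv (g I : Mat) : Mat :=
  mx_scale (- / pfaff (comp g I)) (comp I (pfaff_adj (comp g I))).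

Lemma metric_inv_r g I : sym_mx g -> posdef_mx g -> cplx_mx I -> herm_mx g I ->
  mx_eq (comp g (metric_inv g I)) delta.
Proof.
  intros Hg Hp HI HH i j Hi Hj.
  pose proof (pfaff_metric_cplx_neq0 g I Hg Hp HI HH) as Hnz.
  unfold metric_inv. rewrite comp_scale_r, <- comp_assoc.
  rewrite mul_pfaff_adj by auto using skew_metric_cplx. field. auto.
Qed.

Lemma metric_inv_l g I : sym_mx g -> posdef_mx g -> cplx_mx I -> herm_mx g I ->
  mx_eq (comp (metric_inv g I) g) delta.
Proof.
  intros Hg Hp HI HH i j Hi Hj.
  pose proof (pfaff_metric_cplx_neq0 g I Hg Hp HI HH) as Hnz.
  pose proof (skew_metric_cplx g I Hg HI HH) as Hw.
  set (w := comp g I) in *.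
  rewrite (mx_eq_compr _ _ _ (metric_of_form g I HI)) by auto.
  transitivity (/ pfaff w * comp I (comp (comp (pfaff_adj w) w) I) i j).
  { unfold metric_inv. fold w. unfold comp, mx_scale, sum4. ring. }
  rewrite (mx_eq_compr _ _ _ (mx_eq_compl _ _ _ (pfaff_adj_mul_mx w Hw))) by auto.
  transitivity (/ pfaff w * (- pfaff w) * comp I (comp delta I) i j).
  { unfold comp, mx_scale, sum4. ring. }
  rewrite (mx_eq_compr _ _ _ (comp_delta_l I)) by auto. rewrite HI by auto. field. auto.
Qed.

Lemma pfaff_adj_form g X G : cplx_mx X -> skew_mx (comp g X) -> mx_eq (comp G g) delta ->
  mx_eq (pfaff_adj (comp g X)) (mx_scale (pfaff (comp g X)) (comp X G)).
Proof.
  intros HX Hw HGg.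
  set (w := comp g X) in *.
  assert (XGw : mx_eq (comp (comp X G) w) (mx_scale (-1) delta)).
  { intros i j Hi Hj.
    transitivity (comp X (comp (comp G g) X) i j); [unfold w, comp, sum4; ring|].
    rewrite (mx_eq_compr _ _ _ (mx_eq_compl _ _ _ HGg)) by auto.
    rewrite (mx_eq_compr _ _ _ (comp_delta_l X)) by auto. rewrite HX by auto. unfold mx_scale; ring. }
  intros i j Hi Hj.
  transitivity (- comp (comp (comp X G) w) (pfaff_adj w) i j).
  { rewrite (mx_eq_compl _ _ _ XGw) by auto. rewrite comp_scale_l, comp_delta_l by auto. ring. }
  rewrite comp_assoc. rewrite (mx_eq_compr _ _ _ (mul_pfaff_adj_mx w Hw)) by auto.
  rewrite comp_scale_r, comp_delta_r by auto. unfold mx_scale. ring.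
Qed.

(** * Two compatible complex structures at a point *)

Definition angle_mx (I J : Mat) := / 4 * sum4 (fun i => comp I J i i).

Definition nondeg_mx (I J : Mat) := forall v : Vec,
  (forall i, (i < 4)%nat -> sum4 (fun j => commut I J i j * v j) = 0) ->
  forall i, (i < 4)%nat -> v i = 0.

Record gk_mx (g I J : Mat) : Prop := {
  gk_sym : sym_mx g;
  gk_posdef : posdef_mx g;
  gk_cplxI : cplx_mx I;
  gk_hermI : herm_mx g I;
  gk_cplxJ : cplx_mx J;
  gk_hermJ : herm_mx g J;
  gk_nondeg : nondeg_mx I J }.

Lemma nondeg_mx_commut_col0 I J : nondeg_mx I J ->
  ~ (forall i, (i < 4)%nat -> commut I J i 0%nat = 0).
Proof.
  intros Hnd H0.
  assert (E : delta 0%nat 0%nat = 0).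
  { apply (Hnd (fun j => delta j 0%nat)); [|lia].
    intros i Hi. rewrite sum4_mul_delta by lia. auto. }
  unfold delta in E; simpl in E; lra.
Qed.

(* Conjugating by [g^{-1}] the polarization of [w pfaff_adj w = - pfaff w] at [w = g I, g J]. *)
Lemma pfaff_anticomm g I J : sym_mx g -> posdef_mx g -> cplx_mx I -> herm_mx g I ->
  cplx_mx J -> herm_mx g J -> forall i j, (i < 4)%nat -> (j < 4)%nat ->
  pfaff (comp g J) * comp I J i j + pfaff (comp g I) * comp J I i j
  = - pfaff_polar (comp g I) (comp g J) * delta i j.
Proof.
  intros Hg Hp HI HHI HJ HHJ.
  pose proof (skew_metric_cplx g I Hg HI HHI) as HwI.
  pose proof (skew_metric_cplx g J Hg HJ HHJ) as HwJ.
  set (G := metric_inv g I). pose proof (metric_inv_l g I Hg Hp HI HHI) as HGg. fold G in HGg.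
  set (wI := comp g I) in *. set (wJ := comp g J) in *.
  set (Pm := mx_add (comp wI (pfaff_adj wJ)) (comp wJ (pfaff_adj wI))).
  assert (Hpol : mx_eq Pm (mx_scale (- pfaff_polar wI wJ) delta)).
  { intros i j Hi Hj. unfold Pm, mx_add, mx_scale. rewrite pfaff_polar_adj by auto. ring. }
  assert (Hsub : mx_eq Pm (mx_add (comp wI (mx_scale (pfaff wJ) (comp J G)))
                                  (comp wJ (mx_scale (pfaff wI) (comp I G))))).
  { apply mx_eq_add; apply mx_eq_compr; apply pfaff_adj_form; auto. }
  intros i j Hi Hj.
  assert (A : comp (comp G Pm) g i j = - pfaff_polar wI wJ * delta i j).
  { rewrite (mx_eq_compl _ _ _ (mx_eq_compr _ _ _ Hpol)) by auto.
    transitivity (- pfaff_polar wI wJ * comp (comp G delta) g i j).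
    { unfold comp, mx_scale, sum4. ring. }
    rewrite (mx_eq_compl _ _ _ (comp_delta_r _)), HGg by auto. ring. }
  assert (B : comp (comp G Pm) g i j = pfaff wJ * comp I J i j + pfaff wI * comp J I i j).
  { rewrite (mx_eq_compl _ _ _ (mx_eq_compr _ _ _ Hsub)) by auto.
    transitivity (pfaff wJ * comp (comp G g) (comp (comp I J) (comp G g)) i j
                + pfaff wI * comp (comp G g) (comp (comp J I) (comp G g)) i j).
    { unfold wI, wJ, comp, mx_add, mx_scale, sum4. ring. }
    rewrite !(mx_eq_compl _ _ _ HGg) by auto.
    rewrite !(mx_eq_compr _ _ _ (mx_eq_compr _ _ _ HGg)) by auto.
    rewrite !comp_delta_l, !comp_delta_r by auto. ring. }
  rewrite <- B, A. ring.
Qed.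

Section Orientation.

Variables g I J : Mat.
Hypothesis HP : gk_mx g I J.

Lemma pfaff_anticomm_conj : forall i j, (i < 4)%nat -> (j < 4)%nat ->
  pfaff (comp g J) * comp J I i j + pfaff (comp g I) * comp I J i j
  = - pfaff_polar (comp g I) (comp g J) * delta i j.
Proof.
  destruct HP as [Hg Hp HI HHI HJ HHJ _].
  pose proof (pfaff_anticomm g I J Hg Hp HI HHI HJ HHJ) as S.
  set (a := pfaff (comp g I)) in *. set (b := pfaff (comp g J)) in *.
  set (B := pfaff_polar (comp g I) (comp g J)) in *. clearbody a b B.
  intros i j Hi Hj.
  assert (E : b * comp J I i j + a * comp I J i j + B * delta i j =
     - sum4 (fun k => I i k * sum4 (fun l => (b * comp I J k l + a * comp J I k l + B * delta k l) * I l j))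
     + sum4 (fun k => cplx_defect I i k * (b * comp J I k j))
     + sum4 (fun k => a * comp I J i k * cplx_defect I k j)
     + B * cplx_defect I i j).
  { case4 i; case4 j; unfold cplx_defect, comp, sum4, delta; simpl; ring. }
  rewrite (sum4_eq0 (fun k => I i k * _)) in E.
  2:{ intros k Hk. apply Rmult_eq_0_compat_l, sum4_eq0. intros l Hl. rewrite S by auto. ring. }
  rewrite (sum4_eq0 (fun k => cplx_defect I i k * _)) in E.
  2:{ intros k Hk. rewrite cplx_defect0 by auto. ring. }
  rewrite (sum4_eq0 (fun k => a * comp I J i k * _)) in E.
  2:{ intros k Hk. rewrite cplx_defect0 by auto. ring. }
  rewrite cplx_defect0 in E by auto. lra.
Qed.

(* If the Pfaffians differed, the two relations would force [I J = J I], contradicting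
   nondegeneracy: I and J induce the same orientation. *)
Lemma gk_mx_pfaff_eq : pfaff (comp g I) = pfaff (comp g J).
Proof.
  destruct (Req_dec (pfaff (comp g I)) (pfaff (comp g J))) as [|Hne]; auto. exfalso.
  apply (nondeg_mx_commut_col0 I J (gk_nondeg _ _ _ HP)). intros i Hi.
  destruct HP as [Hg Hp HI HHI HJ HHJ _].
  pose proof (pfaff_anticomm g I J Hg Hp HI HHI HJ HHJ i 0%nat Hi ltac:(lia)).
  pose proof (pfaff_anticomm_conj i 0%nat Hi ltac:(lia)).
  unfold commut. apply (Rmult_eq_reg_l (pfaff (comp g J) - pfaff (comp g I))); lra.
Qed.

Lemma gk_mx_pfaff_anticomm : forall i j, (i < 4)%nat -> (j < 4)%nat ->
  pfaff (comp g I) * (comp I J i j + comp J I i j)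
  = - pfaff_polar (comp g I) (comp g J) * delta i j.
Proof.
  destruct HP as [Hg Hp HI HHI HJ HHJ _].
  intros i j Hi Hj. rewrite <- (pfaff_anticomm g I J) by auto. rewrite gk_mx_pfaff_eq. ring.
Qed.

Lemma gk_mx_pfaff_polar : pfaff_polar (comp g I) (comp g J) + 2 * angle_mx I J * pfaff (comp g I) = 0.
Proof.
  assert (Tr : sum4 (fun i => pfaff (comp g I) * (comp I J i i + comp J I i i))
               = sum4 (fun i => - pfaff_polar (comp g I) (comp g J) * delta i i))
    by (apply sum4_ext; intros; apply gk_mx_pfaff_anticomm; auto).
  assert (TrIJ : sum4 (fun i => pfaff (comp g I) * (comp I J i i + comp J I i i))
                 = pfaff (comp g I) * (2 * sum4 (fun i => comp I J i i))) by (unfold comp, sum4; ring).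
  assert (TrB : sum4 (fun i => - pfaff_polar (comp g I) (comp g J) * delta i i)
                = -4 * pfaff_polar (comp g I) (comp g J)) by (unfold sum4, delta; simpl; ring).
  unfold angle_mx. rewrite TrIJ, TrB in Tr. lra.
Qed.

Lemma gk_mx_anticomm : forall i j, (i < 4)%nat -> (j < 4)%nat ->
  comp I J i j + comp J I i j = 2 * angle_mx I J * delta i j.
Proof.
  intros i j Hi Hj.
  pose proof (pfaff_metric_cplx_neq0 g I (gk_sym _ _ _ HP) (gk_posdef _ _ _ HP)
                (gk_cplxI _ _ _ HP) (gk_hermI _ _ _ HP)) as Hnz.
  apply (Rmult_eq_reg_l (pfaff (comp g I))); auto.
  rewrite gk_mx_pfaff_anticomm by auto.
  replace (pfaff_polar (comp g I) (comp g J)) with (- (2 * angle_mx I J * pfaff (comp g I)))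
    by (pose proof gk_mx_pfaff_polar; lra).
  ring.
Qed.

End Orientation.

Definition anticomm_defect (I J : Mat) i j := comp I J i j + comp J I i j - 2 * angle_mx I J * delta i j.

Lemma commut_sq I J : cplx_mx I -> cplx_mx J ->
  (forall i j, (i < 4)%nat -> (j < 4)%nat -> comp I J i j + comp J I i j = 2 * angle_mx I J * delta i j) ->
  forall i j, (i < 4)%nat -> (j < 4)%nat ->
  comp (commut I J) (commut I J) i j = 4 * (angle_mx I J ^ 2 - 1) * delta i j.
Proof.
  intros HI HJ HS.
  assert (HeS : forall i j, (i < 4)%nat -> (j < 4)%nat -> anticomm_defect I J i j = 0).
  { intros i j Hi Hj; unfold anticomm_defect; rewrite HS by auto; ring. }
  intros i j Hi Hj.
  set (p := angle_mx I J).
  assert (E : comp (commut I J) (commut I J) i j - 4 * (p ^ 2 - 1) * delta i j =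
    4 * sum4 (fun k => I i k * sum4 (fun l => anticomm_defect I J k l * J l j))
    - 4 * sum4 (fun k => cplx_defect I i k * cplx_defect J k j) + 4 * cplx_defect I i j
    + 4 * cplx_defect J i j - 2 * sum4 (fun k => comp I J i k * anticomm_defect I J k j)
    + 4 * p * anticomm_defect I J i j - 2 * sum4 (fun k => anticomm_defect I J i k * comp I J k j)
    + sum4 (fun k => anticomm_defect I J i k * anticomm_defect I J k j)).
  { unfold anticomm_defect, cplx_defect. fold p.
    case4 i; case4 j; unfold commut, comp, sum4, delta; simpl; ring. }
  rewrite !(sum4_eq0 (fun k => _ * anticomm_defect I J k j)) in E by (intros; rewrite HeS by auto; ring).
  rewrite !(sum4_eq0 (fun k => anticomm_defect I J i k * _)) in E by (intros; rewrite HeS by auto; ring).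
  rewrite (sum4_eq0 (fun k => I i k * _)) in E.
  2:{ intros k Hk. apply Rmult_eq_0_compat_l, sum4_eq0. intros; rewrite HeS by auto; ring. }
  rewrite (sum4_eq0 (fun k => cplx_defect I i k * _)) in E by (intros; rewrite cplx_defect0 by auto; ring).
  rewrite (cplx_defect0 I), (cplx_defect0 J), (HeS i j) in E by auto. lra.
Qed.

(* For [p^2 = 1], the first column of [[I,J]] would lie in the kernel of [[I,J]]. *)
Lemma angle_sq_neq1 I J : nondeg_mx I J ->
  (forall i j, (i < 4)%nat -> (j < 4)%nat ->
     comp (commut I J) (commut I J) i j = 4 * (angle_mx I J ^ 2 - 1) * delta i j) ->
  angle_mx I J ^ 2 - 1 <> 0.
Proof.
  intros Hnd HC Hp. apply (nondeg_mx_commut_col0 I J Hnd).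
  apply (Hnd (fun j => commut I J j 0%nat)). intros i Hi.
  fold (comp (commut I J) (commut I J) i 0%nat). rewrite HC by (auto; lia). rewrite Hp. ring.
Qed.

(** * First-order jets and Gray's formula for the covariant derivative of the Kähler form *)

(* [dA l i j] stands for the derivative of [A i j] in direction [l].  The derivative of
   the metric enters only through its symmetrization [jet_sym], so no symmetry of [dg]
   has to be assumed. *)
Definition Jet := nat -> Mat.

Definition jet_sym (dg : Jet) : Jet := fun l i j => / 2 * (dg l i j + dg l j i).

Definition christoffel (dg : Jet) m l b :=
  / 2 * (jet_sym dg l m b + jet_sym dg b m l - jet_sym dg m l b).

Definition djet_form (g I : Mat) (dg dI : Jet) : Jet := fun l b c =>
  sum4 (fun k => jet_sym dg l b k * I k c + g b k * dI l k c).

Definition nabla_form (g I : Mat) (dg dI : Jet) : Jet := fun l b c =>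
  djet_form g I dg dI l b c - sum4 (fun m => christoffel dg m l b * I m c)
  + sum4 (fun m => christoffel dg m l c * I m b).

Definition ext_d (dw : Jet) i j k := dw i j k - dw j i k + dw k i j.

Definition cyc_sum (A : Jet) i j k := A i j k + A j k i + A k i j.

Definition skew_jet (A : Jet) :=
  forall l b c, (l < 4)%nat -> (b < 4)%nat -> (c < 4)%nat -> A l b c = - A l c b.

Definition act_pair (I : Mat) (A : Jet) l b c :=
  sum4 (fun m => sum4 (fun n => I m b * I n c * A l m n)).

Definition gray_proj (X : Mat) (h : Jet) l b c := / 2 * (h l b c - act_pair X h l b c).

Definition djet_cplx_defect (I : Mat) (dI : Jet) l i j :=
  sum4 (fun k => dI l i k * I k j + I i k * dI l k j).

Definition djet_herm_defect (g I : Mat) (dg dI : Jet) l i j :=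
  sum4 (fun k => sum4 (fun m => dI l k i * I m j * g k m + I k i * dI l m j * g k m
                                + I k i * I m j * jet_sym dg l k m)) - jet_sym dg l i j.

Definition nijenhuis_jet (I : Mat) (dI : Jet) i j k :=
  sum4 (fun l => I l i * dI l k j - I l j * dI l k i - I k l * (dI i l j - dI j l i)).

(* The first-order consequences of [I^2 = -1], [g(I.,I.) = g] and [N_I = 0] at a point. *)
Record herm_jet (g I : Mat) (dg dI : Jet) : Prop := {
  hj_cplx : forall l i j, (l < 4)%nat -> (i < 4)%nat -> (j < 4)%nat ->
    djet_cplx_defect I dI l i j = 0;
  hj_herm : forall l i j, (l < 4)%nat -> (i < 4)%nat -> (j < 4)%nat ->
    djet_herm_defect g I dg dI l i j = 0;
  hj_integrable : forall i j k, (i < 4)%nat -> (j < 4)%nat -> (k < 4)%nat ->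
    nijenhuis_jet I dI i j k = 0 }.

Lemma Rplus_eq0 a b : a = 0 -> b = 0 -> a + b = 0. Proof. intros -> ->; ring. Qed.
Lemma Rminus_eq0 a b : a = 0 -> b = 0 -> a - b = 0. Proof. intros -> ->; ring. Qed.

Ltac split_eq0 :=
  repeat match goal with
  | |- _ + _ = 0 => apply Rplus_eq0
  | |- _ - _ = 0 => apply Rminus_eq0
  end.

Section HermitianJet.

Variables (g I : Mat) (dg dI : Jet).
Hypotheses (Hg : sym_mx g) (HI : cplx_mx I) (HH : herm_mx g I) (HJ : herm_jet g I dg dI).

Lemma djet_form_skew : skew_jet (djet_form g I dg dI).
Proof.
  intros l b c Hl Hb Hc.
  enough (djet_form g I dg dI l b c + djet_form g I dg dI l c b = 0) by lra.
  transitivity (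
    sum4 (fun k => dI l k b * (sum4 (fun m => g k m * comp I I m c) + g k c))
    + sum4 (fun k => I k b * (sum4 (fun m => jet_sym dg l k m * comp I I m c) + jet_sym dg l k c))
    + sum4 (fun k => I k b * sum4 (fun m => g k m * djet_cplx_defect I dI l m c))
    - sum4 (fun k => djet_herm_defect g I dg dI l b k * I k c)
    - sum4 (fun k => herm_defect g I b k * dI l k c)
    + sum4 (fun k => dI l k b * (g c k - g k c))).
  { unfold djet_form, djet_cplx_defect, djet_herm_defect, herm_defect, jet_sym, comp, sum4. ring. }
  split_eq0; apply sum4_eq0; intros k Hk.
  - apply Rmult_eq_0_compat_l, (sum4_comp_cplx I HI (fun m => g k m)); auto.
  - apply Rmult_eq_0_compat_l, (sum4_comp_cplx I HI (fun m => jet_sym dg l k m)); auto.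
  - apply Rmult_eq_0_compat_l, sum4_eq0; intros m Hm; apply Rmult_eq_0_compat_l, (hj_cplx _ _ _ _ HJ); auto.
  - apply Rmult_eq_0_compat_r, (hj_herm _ _ _ _ HJ); auto.
  - apply Rmult_eq_0_compat_r, herm_defect0; auto.
  - apply Rmult_eq_0_compat_l; rewrite Hg by auto; ring.
Qed.

Lemma nabla_form_skew : skew_jet (nabla_form g I dg dI).
Proof.
  intros l b c Hl Hb Hc.
  assert (E : nabla_form g I dg dI l b c + nabla_form g I dg dI l c b
              = djet_form g I dg dI l b c + djet_form g I dg dI l c b) by (unfold nabla_form; ring).
  rewrite djet_form_skew in E by auto. lra.
Qed.

(* Torsion-freeness of the Levi-Civita connection. *)
Lemma ext_d_nabla_form l b c : (l < 4)%nat -> (b < 4)%nat -> (c < 4)%nat ->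
  ext_d (djet_form g I dg dI) l b c = cyc_sum (nabla_form g I dg dI) l b c.
Proof.
  intros Hl Hb Hc.
  assert (E : ext_d (djet_form g I dg dI) l b c = cyc_sum (nabla_form g I dg dI) l b c
             - (djet_form g I dg dI b l c + djet_form g I dg dI b c l)).
  { unfold ext_d, cyc_sum, nabla_form, christoffel, jet_sym, sum4. ring. }
  rewrite (djet_form_skew b l c) in E by auto. lra.
Qed.

Lemma nabla_form_act_pair l b c : (l < 4)%nat -> (b < 4)%nat -> (c < 4)%nat ->
  act_pair I (nabla_form g I dg dI) l b c = - nabla_form g I dg dI l b c.
Proof.
  intros Hl Hb Hc.
  enough (act_pair I (nabla_form g I dg dI) l b c + nabla_form g I dg dI l b c = 0) by lra.
  transitivity (
     sum4 (fun k => I k b * sum4 (fun m => g k m * djet_cplx_defect I dI l m c))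
     - sum4 (fun k => herm_defect g I b k * dI l k c)
     + sum4 (fun k => I k b * (sum4 (fun m => christoffel dg k l m * comp I I m c) + christoffel dg k l c))
     + sum4 (fun m => I m c * (sum4 (fun k => christoffel dg k l m * comp I I k b) + christoffel dg b l m))).
  { unfold act_pair, nabla_form, djet_form, djet_cplx_defect, herm_defect, christoffel, jet_sym,
      comp, sum4. field. }
  split_eq0; apply sum4_eq0; intros k Hk.
  - apply Rmult_eq_0_compat_l, sum4_eq0; intros m Hm; apply Rmult_eq_0_compat_l, (hj_cplx _ _ _ _ HJ); auto.
  - apply Rmult_eq_0_compat_r, herm_defect0; auto.
  - apply Rmult_eq_0_compat_l, (sum4_comp_cplx I HI (fun m => christoffel dg k l m)); auto.
  - apply Rmult_eq_0_compat_l, (sum4_comp_cplx I HI (fun m => christoffel dg m l k)); auto.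
Qed.

Definition nabla_nijenhuis (A : Jet) a b c :=
  sum4 (fun l => I l b * A l a c) - sum4 (fun l => I l c * A l a b)
  + sum4 (fun m => A b a m * I m c) - sum4 (fun m => A c a m * I m b).

Lemma nabla_nijenhuis0 a b c : (a < 4)%nat -> (b < 4)%nat -> (c < 4)%nat ->
  nabla_nijenhuis (nabla_form g I dg dI) a b c = 0.
Proof.
  intros Ha Hb Hc.
  assert (E : sum4 (fun k => g a k * nijenhuis_jet I dI b c k)
     = nabla_nijenhuis (nabla_form g I dg dI) a b c
     - sum4 (fun k => g a k * djet_cplx_defect I dI b k c)
     + sum4 (fun k => g a k * djet_cplx_defect I dI c k b)
     - (sum4 (fun k => christoffel dg a b k * comp I I k c) + christoffel dg a b c)
     + (sum4 (fun k => christoffel dg a c k * comp I I k b) + christoffel dg a c b)).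
  { unfold nabla_nijenhuis, nijenhuis_jet, nabla_form, djet_form, djet_cplx_defect, christoffel,
      jet_sym, comp, sum4. field. }
  rewrite !sum4_eq0 in E by (intros; apply Rmult_eq_0_compat_l;
                             first [apply (hj_integrable _ _ _ _ HJ) | apply (hj_cplx _ _ _ _ HJ)]; auto).
  rewrite (sum4_comp_cplx I HI (fun k => christoffel dg a b k) c Hc) in E.
  rewrite (sum4_comp_cplx I HI (fun k => christoffel dg a c k) b Hb) in E.
  lra.
Qed.

Lemma gray_identity (A : Jet) X Y Z :
  2 * A X Y Z - cyc_sum A X Y Z + act_pair I (fun l m n => cyc_sum A l m n) X Y Z =
  (A X Y Z + act_pair I A X Y Z) - sum4 (fun n => I n Z * nabla_nijenhuis A X Y n)
  + sum4 (fun l => sum4 (fun n => I l Y * I n Z * (A l X n + A l n X)))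
  - (sum4 (fun l => A l X Y * comp I I l Z) + A Z X Y)
  + (sum4 (fun m => A Y X m * comp I I m Z) + A Y X Z)
  - (A Y X Z + A Y Z X).
Proof. unfold cyc_sum, act_pair, nabla_nijenhuis, comp, sum4. ring. Qed.

(* Gray: on a Hermitian manifold [2 nabla w] is the (2,1)+(1,2) part of [d w]. *)
Lemma nabla_form_gray l b c : (l < 4)%nat -> (b < 4)%nat -> (c < 4)%nat ->
  nabla_form g I dg dI l b c = gray_proj I (ext_d (djet_form g I dg dI)) l b c.
Proof.
  intros Hl Hb Hc.
  set (A := nabla_form g I dg dI).
  pose proof (gray_identity A l b c) as E.
  rewrite nabla_form_act_pair in E by auto.
  rewrite (sum4_eq0 (fun n => I n c * nabla_nijenhuis A l b n)) in E
    by (intros; apply Rmult_eq_0_compat_l, nabla_nijenhuis0; auto).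
  rewrite (sum4_eq0 (fun l0 => sum4 (fun n => I l0 b * I n c * (A l0 l n + A l0 n l)))) in E.
  2:{ intros m Hm. apply sum4_eq0. intros n Hn. apply Rmult_eq_0_compat_l.
      unfold A. rewrite (nabla_form_skew m l n) by auto. ring. }
  rewrite (sum4_comp_cplx I HI (fun m => A m l b) c Hc) in E.
  rewrite (sum4_comp_cplx I HI (fun m => A b l m) c Hc) in E.
  unfold A in E. rewrite (nabla_form_skew b l c) in E by auto.
  unfold gray_proj, act_pair. rewrite ext_d_nabla_form by auto.
  rewrite (sum4_ext (fun m => sum4 (fun n => I m b * I n c * ext_d (djet_form g I dg dI) l m n))
                    (fun m => sum4 (fun n => I m b * I n c * cyc_sum A l m n))).
  2:{ intros m Hm. apply sum4_ext. intros n Hn. rewrite ext_d_nabla_form by auto. reflexivity. }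
  unfold act_pair in E; fold A in E |- *. lra.
Qed.

End HermitianJet.

(** * Forms of the shape theta /\ w *)

Definition wedge11 (a b : Vec) : Mat := fun i j => a i * b j - a j * b i.
Definition wedge12m (t : Vec) (w : Mat) : Jet := fun i j k => t i * w j k + t j * w k i + t k * w i j.
Definition vec_act (t : Vec) (X : Mat) : Vec := fun i => sum4 (fun k => t k * X k i).
Definition act2m (X w : Mat) : Mat := fun i j => sum4 (fun k => sum4 (fun l => X k i * X l j * w k l)).
Definition act3m (X : Mat) (h : Jet) : Jet := fun a b c =>
  sum4 (fun k => sum4 (fun l => sum4 (fun m => X k a * X l b * X m c * h k l m))).

(* [wedge_dual a w] determines [a /\ w] for skew [w] (it is the contraction of [*(a /\ w)]). *)
Definition wedge_dual (a : Vec) (w : Mat) : Vec := fun l => sum4 (fun m => a m * pfaff_adj w m l).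

Lemma pfaff_polar_wedge (a b : Vec) (w : Mat) :
  pfaff_polar (wedge11 a b) w = sum4 (fun i => sum4 (fun j => a i * pfaff_adj w i j * b j)).
Proof. unfold pfaff_polar, wedge11, sum4, pfaff_adj. simpl. ring. Qed.

Lemma pfaff_polar_eq_l v v' w : mx_eq v v' -> pfaff_polar v w = pfaff_polar v' w.
Proof. intros H. unfold pfaff_polar. rewrite !H by lia. ring. Qed.

Lemma pfaff_polar_add_l v w u :
  pfaff_polar (fun b c => v b c + w b c) u = pfaff_polar v u + pfaff_polar w u.
Proof. unfold pfaff_polar; ring. Qed.

Lemma vec_act_cplx X (t : Vec) : cplx_mx X -> forall i, (i < 4)%nat -> vec_act (vec_act t X) X i = - t i.
Proof.
  intros HX i Hi.
  transitivity (sum4 (fun k => t k * comp X X k i)); [unfold vec_act, comp, sum4; ring|].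
  pose proof (sum4_comp_cplx X HX t i Hi). lra.
Qed.

Lemma act3m_wedge X t w a b c :
  act3m X (wedge12m t w) a b c = wedge12m (vec_act t X) (act2m X w) a b c.
Proof. unfold act3m, wedge12m, vec_act, act2m, sum4. ring. Qed.

Lemma act3m_ext X (h h' : Jet) :
  (forall a b c, (a < 4)%nat -> (b < 4)%nat -> (c < 4)%nat -> h a b c = h' a b c) ->
  forall a b c, act3m X h a b c = act3m X h' a b c.
Proof.
  intros H a b c. unfold act3m. apply sum4_ext; intros k Hk. apply sum4_ext; intros l Hl.
  apply sum4_ext; intros m Hm. rewrite H by auto. ring.
Qed.

Definition act_slot1 (X : Mat) (h : Jet) : Jet := fun a l m => sum4 (fun k => X k a * h k l m).
Definition act_slot2 (X : Mat) (h : Jet) : Jet := fun k b m => sum4 (fun l => X l b * h k l m).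
Definition act_slot3 (X : Mat) (h : Jet) : Jet := fun k l c => sum4 (fun m => X m c * h k l m).

Lemma act3m_slots X h : act3m X h = act_slot1 X (act_slot2 X (act_slot3 X h)).
Proof.
  extensionality a; extensionality b; extensionality c.
  unfold act3m, act_slot1, act_slot2, act_slot3, sum4. ring.
Qed.

Lemma act_slot12 X Y h : act_slot1 X (act_slot2 Y h) = act_slot2 Y (act_slot1 X h).
Proof. extensionality a; extensionality b; extensionality c. unfold act_slot1, act_slot2, sum4. ring. Qed.

Lemma act_slot13 X Y h : act_slot1 X (act_slot3 Y h) = act_slot3 Y (act_slot1 X h).
Proof. extensionality a; extensionality b; extensionality c. unfold act_slot1, act_slot3, sum4. ring. Qed.

Lemma act_slot23 X Y h : act_slot2 X (act_slot3 Y h) = act_slot3 Y (act_slot2 X h).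
Proof. extensionality a; extensionality b; extensionality c. unfold act_slot2, act_slot3, sum4. ring. Qed.

Lemma act_slot1_sq X h : cplx_mx X -> forall a l m, (a < 4)%nat -> act_slot1 X (act_slot1 X h) a l m = - h a l m.
Proof.
  intros HX a l m Ha. transitivity (sum4 (fun k => h k l m * comp X X k a)).
  { unfold act_slot1, comp, sum4. ring. }
  pose proof (sum4_comp_cplx X HX (fun k => h k l m) a Ha). lra.
Qed.

Lemma act_slot2_sq X h : cplx_mx X -> forall a l m, (l < 4)%nat -> act_slot2 X (act_slot2 X h) a l m = - h a l m.
Proof.
  intros HX a l m Hl. transitivity (sum4 (fun k => h a k m * comp X X k l)).
  { unfold act_slot2, comp, sum4. ring. }
  pose proof (sum4_comp_cplx X HX (fun k => h a k m) l Hl). lra.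
Qed.

Lemma act_slot3_sq X h : cplx_mx X -> forall a l m, (m < 4)%nat -> act_slot3 X (act_slot3 X h) a l m = - h a l m.
Proof.
  intros HX a l m Hm. transitivity (sum4 (fun k => h a l k * comp X X k m)).
  { unfold act_slot3, comp, sum4. ring. }
  pose proof (sum4_comp_cplx X HX (fun k => h a l k) m Hm). lra.
Qed.

Lemma act3m_sq X h : cplx_mx X -> forall a b c, (a < 4)%nat -> (b < 4)%nat -> (c < 4)%nat ->
  act3m X (act3m X h) a b c = - h a b c.
Proof.
  intros HX a b c Ha Hb Hc.
  rewrite !act3m_slots, <- act_slot13, <- act_slot12, <- act_slot23.
  rewrite act_slot1_sq, act_slot2_sq, act_slot3_sq by auto. ring.
Qed.

Lemma wedge12m_ext t t' w w' : (forall i, (i < 4)%nat -> t i = t' i) -> mx_eq w w' ->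
  forall i j k, (i < 4)%nat -> (j < 4)%nat -> (k < 4)%nat -> wedge12m t w i j k = wedge12m t' w' i j k.
Proof. intros H1 H2 i j k Hi Hj Hk. unfold wedge12m. rewrite !H1, !H2 by auto. ring. Qed.

Lemma wedge12m_dual_inj a1 w1 a2 w2 : skew_mx w1 -> skew_mx w2 ->
  (forall l, (l < 4)%nat -> wedge_dual a1 w1 l = wedge_dual a2 w2 l) ->
  forall i j k, (i < 4)%nat -> (j < 4)%nat -> (k < 4)%nat -> wedge12m a1 w1 i j k = wedge12m a2 w2 i j k.
Proof.
  intros H1 H2 HV.
  pose proof (HV 0%nat ltac:(lia)) as V0. pose proof (HV 1%nat ltac:(lia)) as V1.
  pose proof (HV 2%nat ltac:(lia)) as V2. pose proof (HV 3%nat ltac:(lia)) as V3.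
  unfold wedge_dual, sum4, pfaff_adj in V0, V1, V2, V3. simpl in V0, V1, V2, V3.
  intros i j k Hi Hj Hk.
  case4 i; case4 j; case4 k; unfold wedge12m; simpl; rewrite_skew H1; rewrite_skew H2; lra.
Qed.

Lemma gray_proj_ext X (h h' : Jet) :
  (forall a b c, (a < 4)%nat -> (b < 4)%nat -> (c < 4)%nat -> h a b c = h' a b c) ->
  forall l b c, (l < 4)%nat -> (b < 4)%nat -> (c < 4)%nat -> gray_proj X h l b c = gray_proj X h' l b c.
Proof.
  intros H l b c Hl Hb Hc. unfold gray_proj, act_pair. rewrite H by auto. f_equal. f_equal.
  apply sum4_ext; intros m Hm; apply sum4_ext; intros n Hn. rewrite H by auto. ring.
Qed.

Section KahlerForm.

Variables g X : Mat.
Hypotheses (Hg : sym_mx g) (HX : cplx_mx X) (HH : herm_mx g X).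

Lemma act2m_form : mx_eq (act2m X (comp g X)) (comp g X).
Proof.
  intros i j Hi Hj.
  pose proof (skew_metric_cplx g X Hg HX HH i j Hi Hj) as Ha.
  assert (E : act2m X (comp g X) i j = - sum4 (fun k => X k i * g k j)
     + sum4 (fun k => X k i * (sum4 (fun n => g k n * comp X X n j) + g k j))).
  { unfold act2m, comp, sum4. ring. }
  rewrite (sum4_eq0 (fun k => X k i * (sum4 (fun n => g k n * comp X X n j) + g k j))) in E
    by (intros; apply Rmult_eq_0_compat_l, (sum4_comp_cplx X HX (fun n => g k n)); auto).
  assert (E2 : comp g X j i = sum4 (fun k => X k i * g k j)).
  { unfold comp. apply sum4_ext. intros k Hk. rewrite Hg by auto. ring. }
  lra.
Qed.

Lemma gray_proj_wedge (t : Vec) l b c : (l < 4)%nat -> (b < 4)%nat -> (c < 4)%nat ->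
  gray_proj X (wedge12m t (comp g X)) l b c =
  / 2 * (wedge11 t (fun c => comp g X c l) b c - wedge11 (vec_act t X) (fun c => g c l) b c).
Proof.
  intros Hl Hb Hc.
  set (w := comp g X).
  assert (E : gray_proj X (wedge12m t w) l b c
              - / 2 * (wedge11 t (fun c => w c l) b c - wedge11 (vec_act t X) (fun c => g c l) b c) =
    / 2 * (- t l * (act2m X w b c - w b c)
      - vec_act t X b * herm_defect g X c l
      - vec_act t X c * (sum4 (fun k => g l k * comp X X k b) + g l b)
      + t c * (w l b + w b l) + vec_act t X c * (g l b - g b l))).
  { unfold gray_proj, act_pair, wedge12m, wedge11, act2m, vec_act, herm_defect, w, comp, sum4. field. }
  unfold w in E.
  rewrite act2m_form, (herm_defect0 g X HH), (sum4_comp_cplx X HX (fun k => g l k) b Hb) in E by auto.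
  rewrite (skew_metric_cplx g X Hg HX HH l b), (Hg b l) in E by auto. unfold w. lra.
Qed.

Lemma nabla_form_lee dg dX th l : herm_jet g X dg dX ->
  (forall i j k, (i < 4)%nat -> (j < 4)%nat -> (k < 4)%nat ->
     ext_d (djet_form g X dg dX) i j k = wedge12m th (comp g X) i j k) -> (l < 4)%nat ->
  mx_eq (nabla_form g X dg dX l)
        (fun b c => / 2 * (wedge11 th (fun c => comp g X c l) b c
                           - wedge11 (vec_act th X) (fun c => g c l) b c)).
Proof.
  intros HJ HL Hl b c Hb Hc.
  rewrite nabla_form_gray by auto. rewrite (gray_proj_ext X _ (wedge12m th (comp g X)) HL) by auto.
  apply gray_proj_wedge; auto.
Qed.

End KahlerForm.

Section PolarPairing.

Variables g Y G : Mat.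
Hypotheses (HGg : mx_eq (comp G g) delta)
           (Hadj : mx_eq (pfaff_adj (comp g Y)) (mx_scale (pfaff (comp g Y)) (comp Y G))).

Lemma pfaff_polar_wedge_metric (a : Vec) l : (l < 4)%nat ->
  pfaff_polar (wedge11 a (fun j => g j l)) (comp g Y) = pfaff (comp g Y) * sum4 (fun i => a i * Y i l).
Proof.
  intros Hl. rewrite pfaff_polar_wedge.
  rewrite (sum4_ext _ (fun i => sum4 (fun j => a i * mx_scale (pfaff (comp g Y)) (comp Y G) i j * g j l))).
  2:{ intros i Hi. apply sum4_ext. intros j Hj. rewrite Hadj by auto. ring. }
  transitivity (pfaff (comp g Y) * sum4 (fun i => a i * comp (comp Y G) g i l)).
  { unfold mx_scale, comp, sum4. ring. }
  f_equal. apply sum4_ext. intros i Hi. rewrite comp_assoc.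
  rewrite (mx_eq_compr _ _ _ HGg), comp_delta_r by auto. ring.
Qed.

Lemma pfaff_polar_wedge_form Z (a : Vec) l : (l < 4)%nat ->
  pfaff_polar (wedge11 a (fun j => comp g Z j l)) (comp g Y)
  = pfaff (comp g Y) * sum4 (fun i => a i * comp Y Z i l).
Proof.
  intros Hl. rewrite pfaff_polar_wedge.
  rewrite (sum4_ext _ (fun i => sum4 (fun j => a i * mx_scale (pfaff (comp g Y)) (comp Y G) i j * comp g Z j l))).
  2:{ intros i Hi. apply sum4_ext. intros j Hj. rewrite Hadj by auto. ring. }
  transitivity (pfaff (comp g Y) * sum4 (fun i => a i * comp Y (comp (comp G g) Z) i l)).
  { unfold mx_scale, comp, sum4. ring. }
  f_equal. apply sum4_ext. intros i Hi.
  rewrite (mx_eq_compr _ _ _ (mx_eq_compl _ _ _ HGg)), (mx_eq_compr _ _ _ (comp_delta_l Z)) by auto. ring.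
Qed.

Lemma pfaff_polar_lee X th l : (l < 4)%nat ->
  pfaff_polar (fun b c => / 2 * (wedge11 th (fun c => comp g X c l) b c
                                 - wedge11 (vec_act th X) (fun c => g c l) b c)) (comp g Y)
  = / 2 * pfaff (comp g Y) * (sum4 (fun i => th i * comp Y X i l) - sum4 (fun i => vec_act th X i * Y i l)).
Proof.
  intros Hl.
  transitivity (/ 2 * (pfaff_polar (wedge11 th (fun c => comp g X c l)) (comp g Y)
                       - pfaff_polar (wedge11 (vec_act th X) (fun c => g c l)) (comp g Y)));
    [unfold pfaff_polar; ring|].
  rewrite pfaff_polar_wedge_form, pfaff_polar_wedge_metric by auto. ring.
Qed.

End PolarPairing.

Lemma wedge_dual_metric g X G th l : cplx_mx X ->
  mx_eq (pfaff_adj (comp g X)) (mx_scale (pfaff (comp g X)) (comp X G)) -> (l < 4)%nat ->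
  wedge_dual (vec_act th X) (comp g X) l = - pfaff (comp g X) * sum4 (fun k => th k * G k l).
Proof.
  intros HX Hadj Hl. unfold wedge_dual.
  rewrite (sum4_ext _ (fun m => vec_act th X m * mx_scale (pfaff (comp g X)) (comp X G) m l))
    by (intros; rewrite Hadj by auto; ring).
  transitivity (pfaff (comp g X) * sum4 (fun k => th k * comp (comp X X) G k l)).
  { unfold vec_act, mx_scale, comp, sum4. ring. }
  rewrite (sum4_ext (fun k => th k * comp (comp X X) G k l) (fun k => th k * (- G k l))).
  2:{ intros k Hk. rewrite (mx_eq_compl _ _ _ (cplx_mx_sq X HX)), comp_scale_l, comp_delta_l by auto. ring. }
  unfold sum4; ring.
Qed.

(** * The derivative of the angle function *)

Definition christoffel_term (gm X : Mat) : Mat := fun b c =>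
  sum4 (fun m => gm m b * X m c) - sum4 (fun m => gm m c * X m b).

Definition derivation_term (A a : Mat) : Mat := fun b c =>
  sum4 (fun k => A k b * a k c) - sum4 (fun k => A k c * a k b).

Lemma christoffel_derivation g G gm X : sym_mx g -> mx_eq (comp g G) delta ->
  mx_eq (christoffel_term gm X) (derivation_term (comp G gm) (comp g X)).
Proof.
  intros Hg HgG b c Hb Hc.
  assert (Hgm : forall m k, (m < 4)%nat -> (k < 4)%nat -> gm m k = comp g (comp G gm) m k).
  { intros m k Hm Hk. rewrite <- comp_assoc, (mx_eq_compl _ _ _ HgG), comp_delta_l by auto.
    reflexivity. }
  unfold christoffel_term.
  rewrite (sum4_ext (fun m => gm m b * X m c) (fun m => comp g (comp G gm) m b * X m c))
    by (intros; rewrite <- Hgm by auto; ring).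
  rewrite (sum4_ext (fun m => gm m c * X m b) (fun m => comp g (comp G gm) m c * X m b))
    by (intros; rewrite <- Hgm by auto; ring).
  set (A := comp G gm). clearbody A.
  unfold derivation_term, comp, sum4. rewrite_lower Hg. ring.
Qed.

(* [pfaff_polar] is an invariant polynomial: infinitesimally, [gl] acts on it by the trace. *)
Lemma pfaff_polar_derivation A a b : skew_mx a -> skew_mx b ->
  pfaff_polar (derivation_term A a) b + pfaff_polar a (derivation_term A b)
  = sum4 (fun i => A i i) * pfaff_polar a b.
Proof.
  intros Ha Hb. unfold pfaff_polar, derivation_term, sum4. simpl. rewrite_skew Ha; rewrite_skew Hb. ring.
Qed.

Lemma pfaff_polar_christoffel g I J G gm : sym_mx g -> mx_eq (comp g G) delta ->
  skew_mx (comp g I) -> skew_mx (comp g J) ->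
  pfaff_polar (comp g I) (comp g J) + 2 * angle_mx I J * pfaff (comp g I) = 0 ->
  pfaff_polar (christoffel_term gm I) (comp g J) + pfaff_polar (christoffel_term gm J) (comp g I)
  + 2 * angle_mx I J * pfaff_polar (christoffel_term gm I) (comp g I) = 0.
Proof.
  intros Hg HgG HaI HaJ HF.
  rewrite !(pfaff_polar_eq_l _ _ _ (christoffel_derivation g G gm _ Hg HgG)).
  pose proof (pfaff_polar_derivation (comp G gm) _ _ HaI HaJ) as DIJ.
  pose proof (pfaff_polar_derivation (comp G gm) _ _ HaI HaI) as DII.
  rewrite (pfaff_polar_sym (comp g I) (derivation_term _ (comp g I))), pfaff_polarxx in DII.
  rewrite (pfaff_polar_sym (comp g I) (derivation_term _ (comp g J))) in DIJ.
  set (t := sum4 (fun i => comp G gm i i)) in *.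
  transitivity (t * (pfaff_polar (comp g I) (comp g J) + 2 * angle_mx I J * pfaff (comp g I))); [nra|].
  rewrite HF. ring.
Qed.

Definition lee_jet (g X : Mat) (dg dX : Jet) (th : Vec) :=
  forall i j k, (i < 4)%nat -> (j < 4)%nat -> (k < 4)%nat ->
    ext_d (djet_form g X dg dX) i j k = wedge12m th (comp g X) i j k.

Section GeneralizedKahlerJet.

Variables (g I J : Mat) (dg dI dJ : Jet) (th : Vec).
Hypotheses (HP : gk_mx g I J) (HjI : herm_jet g I dg dI) (HjJ : herm_jet g J dg dJ)
  (HL : lee_jet g I dg dI th)
  (Htor : forall a b c, (a < 4)%nat -> (b < 4)%nat -> (c < 4)%nat ->
     act3m I (ext_d (djet_form g I dg dI)) a b c + act3m J (ext_d (djet_form g J dg dJ)) a b c = 0).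

(* [d^c_I w_I = - d^c_J w_J] with [d w_I = th /\ w_I] gives [d w_J = - th /\ w_J]: the
   forms [(th o I) /\ w_I] and [(th o J) /\ w_J] coincide because their [wedge_dual]s only
   involve the common Pfaffian and [g^{-1} th]. *)
Lemma lee_form_opposite : lee_jet g J dg dJ (fun i => - th i).
Proof.
  pose proof (gk_sym _ _ _ HP) as Hg. pose proof (gk_posdef _ _ _ HP) as Hp.
  pose proof (gk_cplxI _ _ _ HP) as HI. pose proof (gk_hermI _ _ _ HP) as HHI.
  pose proof (gk_cplxJ _ _ _ HP) as HJ. pose proof (gk_hermJ _ _ _ HP) as HHJ.
  set (G := metric_inv g I). pose proof (metric_inv_l g I Hg Hp HI HHI) as HGg. fold G in HGg.
  pose proof (skew_metric_cplx g I Hg HI HHI) as HaI. pose proof (skew_metric_cplx g J Hg HJ HHJ) as HaJ.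
  assert (Hdual : forall l, (l < 4)%nat ->
            wedge_dual (vec_act th I) (comp g I) l = wedge_dual (vec_act th J) (comp g J) l).
  { intros l Hl.
    rewrite (wedge_dual_metric g I G th l HI (pfaff_adj_form g I G HI HaI HGg) Hl).
    rewrite (wedge_dual_metric g J G th l HJ (pfaff_adj_form g J G HJ HaJ HGg) Hl).
    rewrite (gk_mx_pfaff_eq g I J HP). reflexivity. }
  assert (HJd : forall k l m, (k < 4)%nat -> (l < 4)%nat -> (m < 4)%nat ->
     act3m J (ext_d (djet_form g J dg dJ)) k l m = - wedge12m (vec_act th J) (comp g J) k l m).
  { intros k l m Hk Hl Hm.
    transitivity (- act3m I (ext_d (djet_form g I dg dI)) k l m); [pose proof (Htor k l m Hk Hl Hm); lra|].
    f_equal.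
    rewrite (act3m_ext I _ (wedge12m th (comp g I)) HL), act3m_wedge.
    rewrite (wedge12m_ext (vec_act th I) (vec_act th I) (act2m I (comp g I)) (comp g I))
      by (auto; apply act2m_form; auto).
    apply wedge12m_dual_inj; auto. }
  intros a b c Ha Hb Hc.
  pose proof (act3m_sq J (ext_d (djet_form g J dg dJ)) HJ a b c Ha Hb Hc) as E.
  rewrite (act3m_ext J _ (fun k l m => - wedge12m (vec_act th J) (comp g J) k l m) HJd) in E.
  replace (act3m J (fun k l m => - wedge12m (vec_act th J) (comp g J) k l m) a b c)
    with (- act3m J (wedge12m (vec_act th J) (comp g J)) a b c) in E by (unfold act3m, sum4; ring).
  rewrite act3m_wedge in E.
  rewrite (wedge12m_ext (vec_act (vec_act th J) J) (fun i => - th i) (act2m J (comp g J)) (comp g J))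
    in E by (auto; intros; first [apply act2m_form | apply vec_act_cplx]; auto).
  lra.
Qed.

(* Differentiate [pfaff_polar w_I w_J + 2 p pfaff w_I = 0]: the Christoffel part of
   [d w = nabla w + Gamma.w] drops out by invariance, and Gray's formula expresses
   [nabla w_I], [nabla w_J] through [th] and [- th]. *)
Lemma angle_jet_lee (dp : Vec) l : (l < 4)%nat ->
  pfaff_polar (djet_form g I dg dI l) (comp g J) + pfaff_polar (comp g I) (djet_form g J dg dJ l)
  + dp l * pfaff_polar (comp g I) (comp g I)
  + 2 * angle_mx I J * pfaff_polar (djet_form g I dg dI l) (comp g I) = 0 ->
  dp l = / 2 * sum4 (fun i => th i * commut I J i l).
Proof.
  intros Hl HdF.
  pose proof (gk_sym _ _ _ HP) as Hg. pose proof (gk_posdef _ _ _ HP) as Hp.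
  pose proof (gk_cplxI _ _ _ HP) as HI. pose proof (gk_hermI _ _ _ HP) as HHI.
  pose proof (gk_cplxJ _ _ _ HP) as HJ. pose proof (gk_hermJ _ _ _ HP) as HHJ.
  pose proof (pfaff_metric_cplx_neq0 g I Hg Hp HI HHI) as Hnz.
  set (G := metric_inv g I).
  pose proof (metric_inv_l g I Hg Hp HI HHI) as HGg. pose proof (metric_inv_r g I Hg Hp HI HHI) as HgG.
  fold G in HGg, HgG.
  pose proof (skew_metric_cplx g I Hg HI HHI) as HaI. pose proof (skew_metric_cplx g J Hg HJ HHJ) as HaJ.
  set (gm := fun m b => christoffel dg m l b).
  assert (Split : forall X dX, mx_eq (djet_form g X dg dX l)
                    (fun b c => nabla_form g X dg dX l b c + christoffel_term gm X b c))
    by (intros X dX b c _ _; unfold nabla_form, christoffel_term, gm; ring).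
  pose proof (pfaff_polar_christoffel g I J G gm Hg HgG HaI HaJ (gk_mx_pfaff_polar g I J HP)) as HChr.
  assert (BJ : pfaff_polar (nabla_form g I dg dI l) (comp g J) =
     / 2 * pfaff (comp g J) * (sum4 (fun i => th i * comp J I i l) - sum4 (fun i => vec_act th I i * J i l))).
  { rewrite (pfaff_polar_eq_l _ _ _ (nabla_form_lee g I Hg HI HHI dg dI th l HjI HL Hl)).
    apply (pfaff_polar_lee g J G HGg (pfaff_adj_form g J G HJ HaJ HGg)); auto. }
  assert (BI : pfaff_polar (nabla_form g J dg dJ l) (comp g I) =
     / 2 * pfaff (comp g I) * (sum4 (fun i => - th i * comp I J i l)
                               - sum4 (fun i => vec_act (fun i => - th i) J i * I i l))).
  { rewrite (pfaff_polar_eq_l _ _ _ (nabla_form_lee g J Hg HJ HHJ dg dJ _ l HjJ lee_form_opposite Hl)).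
    apply (pfaff_polar_lee g I G HGg (pfaff_adj_form g I G HI HaI HGg)); auto. }
  assert (BII : pfaff_polar (nabla_form g I dg dI l) (comp g I) = 0).
  { rewrite (pfaff_polar_eq_l _ _ _ (nabla_form_lee g I Hg HI HHI dg dI th l HjI HL Hl)).
    rewrite (pfaff_polar_lee g I G HGg (pfaff_adj_form g I G HI HaI HGg)) by auto.
    unfold vec_act, comp, sum4. ring. }
  rewrite (pfaff_polar_sym (comp g I)), !(pfaff_polar_eq_l _ _ _ (Split _ _)), !pfaff_polar_add_l in HdF.
  rewrite BJ, BI, BII, pfaff_polarxx, <- (gk_mx_pfaff_eq g I J HP) in HdF.
  set (P := pfaff (comp g I)) in *.
  assert (Q : / 2 * P * (sum4 (fun i => th i * comp J I i l) - sum4 (fun i => vec_act th I i * J i l))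
            + / 2 * P * (sum4 (fun i => - th i * comp I J i l)
                         - sum4 (fun i => vec_act (fun i => - th i) J i * I i l))
            = - P * sum4 (fun i => th i * commut I J i l)).
  { unfold vec_act, commut, comp, sum4. field. }
  apply (Rmult_eq_reg_l (2 * P)); [|lra].
  transitivity (P * sum4 (fun i => th i * commut I J i l)); [nra | field].
Qed.

End GeneralizedKahlerJet.

Lemma lee_of_angle_jet g I J (th dp : Vec) : gk_mx g I J ->
  (forall l, (l < 4)%nat -> dp l = / 2 * sum4 (fun i => th i * commut I J i l)) ->
  forall a, (a < 4)%nat ->
  th a = / (2 * (angle_mx I J ^ 2 - 1)) * sum4 (fun i => dp i * commut I J i a).
Proof.
  intros HP Hdp a Ha.
  pose proof (commut_sq I J (gk_cplxI _ _ _ HP) (gk_cplxJ _ _ _ HP) (gk_mx_anticomm g I J HP)) as HC2.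
  pose proof (angle_sq_neq1 I J (gk_nondeg _ _ _ HP) HC2) as Hp1.
  rewrite (sum4_ext _ (fun i => / 2 * sum4 (fun k => th k * commut I J k i) * commut I J i a))
    by (intros; rewrite Hdp by auto; ring).
  transitivity (/ (2 * (angle_mx I J ^ 2 - 1)) *
                (/ 2 * sum4 (fun k => th k * comp (commut I J) (commut I J) k a))).
  2:{ f_equal. unfold comp, sum4. ring. }
  rewrite (sum4_ext _ (fun k => th k * (4 * (angle_mx I J ^ 2 - 1)) * delta k a))
    by (intros; rewrite HC2 by auto; ring).
  rewrite sum4_mul_delta by auto. field. auto.
Qed.

(** * Partial derivatives and jets of smooth fields *)

Definition has_pd (f : pt -> R) (l : nat) (x : pt) (L : R) :=
  derivable_pt_lim (fun t => f (shift x l t)) 0 L.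

Lemma shift_0 x l : shift x l 0 = x.
Proof. destruct x as [[[a b] c] d]. destruct l as [|[|[|[|l]]]]; simpl; repeat f_equal; ring. Qed.

Lemma has_pd_plus f h l x L1 L2 :
  has_pd f l x L1 -> has_pd h l x L2 -> has_pd (fun y => f y + h y) l x (L1 + L2).
Proof. apply derivable_pt_lim_plus. Qed.

Lemma has_pd_minus f h l x L1 L2 :
  has_pd f l x L1 -> has_pd h l x L2 -> has_pd (fun y => f y - h y) l x (L1 - L2).
Proof. apply derivable_pt_lim_minus. Qed.

Lemma has_pd_opp f l x L : has_pd f l x L -> has_pd (fun y => - f y) l x (- L).
Proof. apply derivable_pt_lim_opp. Qed.

Lemma has_pd_mult f h l x L1 L2 :
  has_pd f l x L1 -> has_pd h l x L2 -> has_pd (fun y => f y * h y) l x (L1 * h x + f x * L2).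
Proof.
  intros H1 H2. pose proof (derivable_pt_lim_mult _ _ _ _ _ H1 H2) as H.
  simpl in H. rewrite shift_0 in H. exact H.
Qed.

Lemma has_pd_const (c : R) l x : has_pd (fun _ => c) l x 0.
Proof. apply (derivable_pt_lim_const c 0). Qed.

Lemma has_pd_eq f l x L1 L2 : has_pd f l x L1 -> L1 = L2 -> has_pd f l x L2.
Proof. intros H ->; exact H. Qed.

Lemma has_pd_unique f l x L1 L2 : has_pd f l x L1 -> has_pd f l x L2 -> L1 = L2.
Proof. apply uniqueness_limite. Qed.

Lemma pd_of_has_pd f l x L : has_pd f l x L -> pd f l x = L.
Proof.
  intros H. apply (has_pd_unique f l x); auto.
  unfold pd. apply epsilon_spec. exists L; exact H.
Qed.

Ltac has_pd_tac leaf :=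
  repeat (first [ leaf | apply has_pd_plus | apply has_pd_minus | apply has_pd_opp
               | apply has_pd_mult | apply has_pd_const ]).

Lemma close_shift x l t del : 0 < del -> Rabs t < del -> close (shift x l t) x del.
Proof.
  intros Hd Ht i Hi. destruct x as [[[a b] c] d].
  destruct l as [|[|[|[|l]]]]; destruct i as [|[|[|[|i]]]]; simpl;
   try (replace (a + t - a) with t by ring); try (replace (b + t - b) with t by ring);
   try (replace (c + t - c) with t by ring); try (replace (d + t - d) with t by ring);
   try (rewrite Rminus_diag, Rabs_R0); auto; lia.
Qed.

Definition jet (X : field2) (x : pt) : Jet := fun l i j => pd (fun y => X y i j) l x.

Section OnOpenSet.

Variables (U : pt -> Prop) (x : pt).
Hypotheses (HU : is_open U) (Hx : U x).

Lemma has_pd_local f h l L : (forall y, U y -> f y = h y) -> has_pd h l x L -> has_pd f l x L.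
Proof.
  intros Hfh Hh eps Heps.
  destruct (HU x Hx) as [del [Hdel Hcl]].
  destruct (Hh eps Heps) as [dl Hdl].
  assert (Hpos : 0 < Rmin dl del) by (apply Rmin_pos; [apply cond_pos | auto]).
  exists (mkposreal _ Hpos). intros t Ht0 Ht. simpl in Ht.
  rewrite (Hfh (shift x l (0 + t))).
  2:{ apply Hcl, close_shift; auto. rewrite Rplus_0_l. apply (Rlt_le_trans _ _ _ Ht), Rmin_r. }
  rewrite (Hfh (shift x l 0)) by (rewrite shift_0; auto).
  apply Hdl; auto. apply (Rlt_le_trans _ _ _ Ht), Rmin_l.
Qed.

Lemma has_pd_local_unique f h l L1 L2 :
  (forall y, U y -> f y = h y) -> has_pd f l x L1 -> has_pd h l x L2 -> L1 = L2.
Proof. intros Hfh H1 H2. apply (has_pd_unique f l x); auto. apply (has_pd_local f h); auto. Qed.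

Lemma jet_has_pd (A : field2) : smooth_field2 U A ->
  forall l i j, (l < 4)%nat -> (i < 4)%nat -> (j < 4)%nat ->
  has_pd (fun y => A y i j) l x (jet A x l i j).
Proof.
  intros HA l i j Hl Hi Hj.
  destruct (HA i j Hi Hj 1%nat) as [_ Hd]. destruct (Hd l Hl) as [Hex _].
  destruct (Hex x Hx) as [L HL]. unfold jet. rewrite (pd_of_has_pd _ _ _ L HL). exact HL.
Qed.

Section Metric.

Variables g : field2.
Hypotheses (Hgs : smooth_field2 U g) (Hsym : forall y, U y -> sym_mx (g y)).

Lemma jet_sym_metric l i j : (l < 4)%nat -> (i < 4)%nat -> (j < 4)%nat ->
  jet_sym (jet g x) l i j = jet g x l i j.
Proof.
  intros Hl Hi Hj. unfold jet_sym.
  rewrite (has_pd_local_unique (fun y => g y j i) (fun y => g y i j) l (jet g x l j i) (jet g x l i j))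
    by (auto using jet_has_pd; intros y Hy; apply Hsym; auto).
  field.
Qed.

Lemma herm_jet_of X : complex_structure U X -> hermitian U g X ->
  herm_jet (g x) (X x) (jet g x) (jet X x).
Proof.
  intros [HXs [Hc HN]] Hh. split.
  - intros l i j Hl Hi Hj.
    apply (has_pd_local_unique (fun y => comp (X y) (X y) i j) (fun _ => - delta i j) l); auto.
    + eapply has_pd_eq. unfold comp, sum4. has_pd_tac ltac:(apply (jet_has_pd X HXs); lia).
      cbv beta. unfold djet_cplx_defect, sum4. ring.
    + apply has_pd_const.
  - intros l i j Hl Hi Hj.
    unfold djet_herm_defect. rewrite jet_sym_metric by auto.
    apply Rminus_diag_eq.
    apply (has_pd_local_unique (fun y => sum4 (fun k => sum4 (fun m => X y k i * X y m j * g y k m)))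
                               (fun y => g y i j) l); auto using jet_has_pd.
    eapply has_pd_eq. unfold sum4.
    has_pd_tac ltac:(first [apply (jet_has_pd X HXs); lia | apply (jet_has_pd g Hgs); lia]).
    cbv beta. unfold sum4. rewrite !jet_sym_metric by lia. ring.
  - intros i j k Hi Hj Hk. apply HN; auto.
Qed.

Lemma form_has_pd X : smooth_field2 U X ->
  forall l j k, (l < 4)%nat -> (j < 4)%nat -> (k < 4)%nat ->
  has_pd (fun y => omega_of g X y j k) l x (djet_form (g x) (X x) (jet g x) (jet X x) l j k).
Proof.
  intros HXs l j k Hl Hj Hk.
  eapply has_pd_eq. unfold omega_of, sum4.
  has_pd_tac ltac:(first [apply (jet_has_pd X HXs); lia | apply (jet_has_pd g Hgs); lia]).
  cbv beta. unfold djet_form, sum4. rewrite !jet_sym_metric by lia. ring.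
Qed.

Lemma pd_form X : smooth_field2 U X ->
  forall l j k, (l < 4)%nat -> (j < 4)%nat -> (k < 4)%nat ->
  pd (fun y => omega_of g X y j k) l x = djet_form (g x) (X x) (jet g x) (jet X x) l j k.
Proof. intros. apply pd_of_has_pd, form_has_pd; auto. Qed.

Lemma pd_act2_form X : complex_structure U X -> hermitian U g X ->
  forall l j k, (l < 4)%nat -> (j < 4)%nat -> (k < 4)%nat ->
  pd (fun y => act2 X (omega_of g X) y j k) l x = djet_form (g x) (X x) (jet g x) (jet X x) l j k.
Proof.
  intros [HXs [Hc _]] Hh l j k Hl Hj Hk. apply pd_of_has_pd.
  apply (has_pd_local _ (fun y => omega_of g X y j k)); [|apply form_has_pd; auto].
  intros y Hy. apply (act2m_form (g y) (X y) (Hsym y Hy) (Hc y Hy) (Hh y Hy)); auto.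
Qed.

Lemma d2_jet X : smooth_field2 U X ->
  forall i j k, (i < 4)%nat -> (j < 4)%nat -> (k < 4)%nat ->
  d2 (omega_of g X) x i j k = ext_d (djet_form (g x) (X x) (jet g x) (jet X x)) i j k.
Proof. intros HXs i j k Hi Hj Hk. unfold d2, ext_d. rewrite !pd_form by auto. reflexivity. Qed.

(* [w_X] is [X]-invariant, so [d^c w_X = - X d w_X]. *)
Lemma dc_jet X : complex_structure U X -> hermitian U g X ->
  forall a b c, dc X (omega_of g X) x a b c
              = - act3m (X x) (ext_d (djet_form (g x) (X x) (jet g x) (jet X x))) a b c.
Proof.
  intros HX Hh a b c. unfold dc, act3, act3m. f_equal.
  apply sum4_ext; intros k Hk. apply sum4_ext; intros l Hl. apply sum4_ext; intros m Hm.
  unfold d2, ext_d. rewrite !pd_act2_form by auto. reflexivity.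
Qed.

End Metric.

End OnOpenSet.

(** * Generalized Kähler structures *)

Section GeneralizedKahler.

Variables (U : pt -> Prop) (g I J : field2).
Hypotheses (HU : is_open U) (HGK : GK U g I J).

Lemma GK_metric_sym y : U y -> sym_mx (g y).
Proof. intros Hy. destruct HGK as [[_ [Hs _]] _]. exact (Hs y Hy). Qed.

Lemma gk_mx_of y : nondegenerate U I J -> U y -> gk_mx (g y) (I y) (J y).
Proof.
  intros Hnd Hy.
  destruct HGK as [[_ [_ Hp]] [[_ [HI _]] [[_ [HJ _]] [HhI [HhJ _]]]]].
  constructor; [exact (GK_metric_sym y Hy) | exact (Hp y Hy) | exact (HI y Hy) | exact (HhI y Hy)
               | exact (HJ y Hy) | exact (HhJ y Hy) | exact (Hnd y Hy)].
Qed.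

Lemma GK_herm_jetI x : U x -> herm_jet (g x) (I x) (jet g x) (jet I x).
Proof.
  intros Hx. destruct HGK as [[Hgs _] [HI [_ [HhI _]]]].
  exact (herm_jet_of U x HU Hx g Hgs GK_metric_sym I HI HhI).
Qed.

Lemma GK_herm_jetJ x : U x -> herm_jet (g x) (J x) (jet g x) (jet J x).
Proof.
  intros Hx. destruct HGK as [[Hgs _] [_ [HJ [_ [HhJ _]]]]].
  exact (herm_jet_of U x HU Hx g Hgs GK_metric_sym J HJ HhJ).
Qed.

Lemma GK_lee_jet theta x : lee_form U g I theta -> U x ->
  lee_jet (g x) (I x) (jet g x) (jet I x) (theta x).
Proof.
  intros Hlee Hx i j k Hi Hj Hk. destruct HGK as [[Hgs _] [[HIs _] _]].
  rewrite <- (d2_jet U x HU Hx g Hgs GK_metric_sym I HIs) by auto. apply Hlee; auto.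
Qed.

Lemma GK_torsion_jet x : U x -> forall a b c, (a < 4)%nat -> (b < 4)%nat -> (c < 4)%nat ->
  act3m (I x) (ext_d (djet_form (g x) (I x) (jet g x) (jet I x))) a b c
  + act3m (J x) (ext_d (djet_form (g x) (J x) (jet g x) (jet J x))) a b c = 0.
Proof.
  intros Hx a b c Ha Hb Hc. destruct HGK as [[Hgs _] [HI [HJ [HhI [HhJ [H [HdcH _]]]]]]].
  destruct (HdcH x Hx a b c Ha Hb Hc) as [EI EJ].
  rewrite (dc_jet U x HU Hx g Hgs GK_metric_sym I HI HhI) in EI.
  rewrite (dc_jet U x HU Hx g Hgs GK_metric_sym J HJ HhJ) in EJ.
  lra.
Qed.

(* The identity [pfaff_polar w_I w_J + 2 p pfaff w_I = 0] holds on all of [U],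
   so its derivative vanishes. *)
Lemma GK_angle_jet x : nondegenerate U I J -> U x -> forall l, (l < 4)%nat ->
  pfaff_polar (djet_form (g x) (I x) (jet g x) (jet I x) l) (comp (g x) (J x))
  + pfaff_polar (comp (g x) (I x)) (djet_form (g x) (J x) (jet g x) (jet J x) l)
  + pd (angle I J) l x * pfaff_polar (comp (g x) (I x)) (comp (g x) (I x))
  + 2 * angle_mx (I x) (J x) * pfaff_polar (djet_form (g x) (I x) (jet g x) (jet I x) l) (comp (g x) (I x))
  = 0.
Proof.
  intros Hnd Hx l Hl. destruct HGK as [[Hgs _] [[HIs _] [[HJs _] _]]].
  assert (Hangle : has_pd (angle I J) l x (pd (angle I J) l x)).
  { assert (Hex : exists L, has_pd (angle I J) l x L).
    { eexists. unfold angle, comp, sum4.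
      has_pd_tac ltac:(first [apply (jet_has_pd U x Hx I HIs); lia
                             | apply (jet_has_pd U x Hx J HJs); lia]). }
    destruct Hex as [L HL]. rewrite (pd_of_has_pd _ _ _ _ HL). exact HL. }
  apply (has_pd_local_unique U x HU Hx
           (fun y => pfaff_polar (omega_of g I y) (omega_of g J y)
                     + angle I J y * pfaff_polar (omega_of g I y) (omega_of g I y)) (fun _ => 0) l).
  - intros y Hy. pose proof (gk_mx_pfaff_polar _ _ _ (gk_mx_of y Hnd Hy)) as E.
    change (pfaff_polar (comp (g y) (I y)) (comp (g y) (J y))
            + angle_mx (I y) (J y) * pfaff_polar (comp (g y) (I y)) (comp (g y) (I y)) = 0).
    rewrite pfaff_polarxx. lra.
  - eapply has_pd_eq. unfold pfaff_polar.
    has_pd_tac ltac:(first [ apply (form_has_pd U x HU Hx g Hgs GK_metric_sym I HIs); lia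
                           | apply (form_has_pd U x HU Hx g Hgs GK_metric_sym J HJs); lia
                           | exact Hangle ]).
    cbv beta. unfold pfaff_polar, omega_of, angle, angle_mx, comp. ring.
  - apply has_pd_const.
Qed.

End GeneralizedKahler.

Theorem lemma3p11 (U : pt -> Prop) (g I J : field2) (theta : field1) :
  is_open U -> GK U g I J -> nondegenerate U I J -> lee_form U g I theta ->
  forall x, U x -> forall a, (a < 4)%nat ->
    theta x a =
      / (2 * (angle I J x ^ 2 - 1)) *
      sum4 (fun i => d0 (angle I J) x i * commut (I x) (J x) i a).
Proof.
  intros HU HGK Hnd Hlee x Hx a Ha.
  pose proof (gk_mx_of U g I J HGK x Hnd Hx) as HP.
  apply (lee_of_angle_jet _ _ _ _ _ HP); auto.
  intros l Hl.
  apply (angle_jet_lee (g x) (I x) (J x) (jet g x) (jet I x) (jet J x) (theta x) HP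
           (GK_herm_jetI U g I J HU HGK x Hx) (GK_herm_jetJ U g I J HU HGK x Hx)
           (GK_lee_jet U g I J HU HGK theta x Hlee Hx) (GK_torsion_jet U g I J HU HGK x Hx)); auto.
  apply (GK_angle_jet U g I J HU HGK); auto.
Qed.
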